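(* Let $Q\colon \mathbb{R}^n\to\mathbb{R}$ be a quadratic form, and let $\mathbb{R}^n_+=\{(a_1,\dots,a_n)\mid a_i\ge 0 \text{ for all } i\}$ with interior $\mathrm{Int}(\mathbb{R}^n_+)=\{(a_1,\dots,a_n)\mid a_i>0 \text{ for all } i\}$. Assume there exist $a,b\in\mathbb{R}^n_+$ with $Q(a)>0$ and $Q(b)<0$. Then there exists an open set $U\subset \mathrm{Int}(\mathbb{R}^n_+)$ such that $U\cap Q^{-1}(0)$ is a nonempty smooth submanifold of $U$ of codimension $1$. *)

From HB Require Import structures.
From mathcomp Require Import all_boot all_order all_algebra.
From mathcomp Require Import all_classical all_reals all_analysis.
Set Implicit Arguments. Unset Strict Implicit. Unset Printing Implicit Defensive.
Import Order.TTheory GRing.Theory Num.Theory.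
Import numFieldNormedType.Exports.
Local Open Scope classical_set_scope.
Local Open Scope ring_scope.

(* R^n is represented by row vectors 'rV[R]_n; x 0 i is the i-th coordinate. *)

(* The quadratic form on R^n with (coefficient) matrix A:
   Q_A(x) = sum_{i,j} A_{ij} x_i x_j.  Every quadratic form has this shape. *)
Definition qform (R : realType) (n : nat) (A : 'M[R]_n) (x : 'rV[R]_n) : R :=
  \sum_(i < n) \sum_(j < n) A i j * x 0 i * x 0 j.

Fixpoint iter_dderiv (R : realType) (V : normedModType R) (vs : seq V)
  (f : V -> R) : V -> R :=
  match vs with
  | [::] => f
  | v :: vs' => fun x => derive (iter_dderiv vs' f) x v
  end.

Definition smooth_on (R : realType) (V : normedModType R) (W : set V)
  (f : V -> R) : Prop :=
  forall (vs : seq V) (x : V), W x ->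
    (forall v : V, derivable (iter_dderiv vs f) x v) /\
    {for x, continuous (iter_dderiv vs f)}.

(* Z is a smooth embedded submanifold of codimension 1 of the open set U:
   locally near each of its points it is the zero set of a smooth function
   with nonvanishing differential (regular level set). *)
Definition smooth_hypersurface_of (R : realType) (V : normedModType R)
  (U Z : set V) : Prop :=
  Z `<=` U /\
  forall p, Z p ->
    exists (W : set V) (f : V -> R),
      [/\ open W, W p, W `<=` U, smooth_on W f &
          Z `&` W = [set x | W x /\ f x = 0]] /\
      (forall x, Z x -> W x -> exists v : V, derive f x v != 0).

From HB Require Import structures.
From mathcomp Require Import all_boot all_order all_algebra.
From mathcomp Require Import all_classical all_reals all_analysis.
From mathcomp Require Import ring lra.
Import Order.TTheory GRing.Theory Num.Theory.
Import numFieldNormedType.Exports.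
Local Open Scope classical_set_scope.
Local Open Scope ring_scope.

(* Move a and b slightly into the open orthant without changing the signs of Q.
   On the segment from a' to b', Q is a quadratic polynomial that is positive at
   0 and negative at 1, so it has a simple root t in [0, 1]: a double root would
   force Q(a') Q(b') = (t (1 - t) M)^2 >= 0.  At p = a' + t (b' - a'), which is in
   the open orthant by convexity, the derivative of Q along b' - a' is nonzero, so
   near p the zero set of Q is a regular level set.  Q is smooth because all its
   iterated directional derivatives are again polynomials of degree at most 2. *)

Section AtMostQuadratic.
Context {R : realType} {V : normedModType R}.

Lemma derive_quadratic_along (f : V -> R) x v (L M : R) :
  (forall h : R, f (h *: v + x) = f x + h * L + h ^+ 2 * M) ->
  derivable f x v /\ derive f x v = L.
Proof.
move=> f_exp.
have quot_cvg : (fun h : R => h^-1 *: ((f \o shift x) (h *: v) - f x)) @ 0^' --> L.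
  have LM_cvg : (fun h : R => L + h * M) @ 0^' --> L.
    apply: cvg_within_filter.
    have : (fun h : R => L + h * M) @ 0 --> L + 0 * M.
      by apply: cvgD; [exact: cvg_cst | apply: cvgM; [exact: cvg_id | exact: cvg_cst]].
    by rewrite mul0r addr0.
  apply: cvg_trans LM_cvg; apply: near_eq_cvg; near=> h.
  have h_neq0 : h != 0 by near: h; exact: nbhs_dnbhs_neq.
  rewrite /= f_exp; change (L + h * M = h^-1 * (f x + h * L + h ^+ 2 * M - f x)).
  by field.
split; first by apply/cvg_ex; exists L.
exact: cvg_lim quot_cvg.
Unshelve. all: by end_near.
Qed.

(* [D x u] is the derivative of [f] at [x] along [u], and [E w u] that of [D ^~ u]
   along [w]; this class is closed under directional derivatives. *)
Definition at_most_quadratic (f : V -> R) :=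
  exists (D : V -> V -> R) (M : V -> R) (E : V -> V -> R),
  [/\ forall x h u, f (h *: u + x) = f x + h * D x u + h ^+ 2 * M u,
      forall x h u w, D (h *: w + x) u = D x u + h * E w u,
      continuous f & forall u, continuous (D ^~ u)].

Lemma at_most_quadratic_derive f u : at_most_quadratic f ->
  (forall x, derivable f x u) /\ at_most_quadratic (fun x => derive f x u).
Proof.
move=> [D [M [E [f_exp D_exp _ D_cont]]]].
have f_der x : derivable f x u /\ derive f x u = D x u.
  by apply: derive_quadratic_along => h; exact: f_exp.
split; first by move=> x; case: (f_der x).
have -> : (fun x => derive f x u) = D ^~ u by apply: funext => x; case: (f_der x).
exists (fun x w => E w u), (fun=> 0), (fun _ _ => 0); split => //.
- by move=> x h w; rewrite D_exp mulr0 addr0.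
- by move=> x h w w'; rewrite mulr0 addr0.
- by move=> w; exact: cst_continuous.
Qed.

Lemma at_most_quadratic_iter_dderiv f vs :
  at_most_quadratic f -> at_most_quadratic (iter_dderiv vs f).
Proof.
move=> f_quad; elim: vs => [|v vs IH] //=.
by case: (at_most_quadratic_derive _ v IH).
Qed.

Lemma at_most_quadratic_smooth f W : at_most_quadratic f -> smooth_on W f.
Proof.
move=> f_quad vs x _; have vs_quad := at_most_quadratic_iter_dderiv _ vs f_quad.
split; first by move=> v; case: (at_most_quadratic_derive _ v vs_quad).
by case: vs_quad => [D [M [E [_ _ cont _]]]]; exact: cont.
Qed.

Lemma regular_zero_set_hypersurface (U : set V) (f : V -> R) :
  open U -> smooth_on U f -> (forall x, U x -> exists v, derive f x v != 0) ->
  smooth_hypersurface_of U (U `&` [set x | f x = 0]).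
Proof.
move=> U_open f_smooth f_reg; split; first by move=> x [].
move=> p [Up _]; exists U, f; split; first split => //.
- by rewrite setIAC setIid.
- by move=> x _; exact: f_reg.
Qed.

End AtMostQuadratic.

Section QuadraticForm.
Context {R : realType} {n : nat} (A : 'M[R]_n).
Local Notation V := 'rV[R]_n.

Definition bform (x y : V) : R :=
  \sum_(i < n) \sum_(j < n) A i j * x 0 i * y 0 j.

Definition dqform (x u : V) : R := bform x u + bform u x.

Lemma bformDl h u x y : bform (h *: u + x) y = h * bform u y + bform x y.
Proof.
rewrite /bform mulr_sumr -big_split; apply: eq_bigr => i _.
rewrite mulr_sumr -big_split; apply: eq_bigr => j _.
by rewrite !mxE /=; ring.
Qed.

Lemma bformDr h u x y : bform y (h *: u + x) = h * bform y u + bform y x.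
Proof.
rewrite /bform mulr_sumr -big_split; apply: eq_bigr => i _.
rewrite mulr_sumr -big_split; apply: eq_bigr => j _.
by rewrite !mxE /=; ring.
Qed.

Lemma continuous_bform (T : topologicalType) (g h : T -> V) :
  continuous g -> continuous h -> continuous (fun x => bform (g x) (h x)).
Proof.
move=> g_cont h_cont.
apply: continuous_big => [|i _]; first exact: add_continuous.
apply: continuous_big => [|j _ x]; first exact: add_continuous.
apply: cvgM; first apply: cvgM; first exact: cvg_cst.
- exact: (continuous_comp (g_cont x) (@coord_continuous _ 1 n 0 i (g x))).
- exact: (continuous_comp (h_cont x) (@coord_continuous _ 1 n 0 j (h x))).
Qed.

Lemma qformD h u x :
  qform A (h *: u + x) = qform A x + h * dqform x u + h ^+ 2 * qform A u.
Proof.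
change (bform (h *: u + x) (h *: u + x) = bform x x + h * dqform x u + h ^+ 2 * bform u u).
by rewrite bformDl !bformDr /dqform; ring.
Qed.

Lemma dqformDl h w x u : dqform (h *: w + x) u = dqform x u + h * dqform w u.
Proof. by rewrite /dqform bformDl bformDr; ring. Qed.

Lemma dqformxx u : dqform u u = qform A u *+ 2.
Proof. by rewrite mulr2n. Qed.

Lemma continuous_qform : continuous (qform A).
Proof.
have id_cont : continuous (@id V) by move=> ?; exact: cvg_id.
exact: (@continuous_bform _ id id id_cont id_cont).
Qed.

Lemma continuous_dqform u : continuous (dqform ^~ u).
Proof.
have id_cont : continuous (@id V) by move=> ?; exact: cvg_id.
have u_cont : continuous (fun=> u : V) := @cst_continuous V V u.
have := @continuous_bform _ _ _ id_cont u_cont.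
have := @continuous_bform _ _ _ u_cont id_cont.
by move=> cont_ux cont_xu x; exact: (continuousD (cont_xu x) (cont_ux x)).
Qed.

Lemma qform_at_most_quadratic : at_most_quadratic (qform A).
Proof.
exists dqform, (qform A), dqform; split.
- by move=> x h u; exact: qformD.
- by move=> x h u w; exact: dqformDl.
- exact: continuous_qform.
- exact: continuous_dqform.
Qed.

Lemma derive_qform x u : derive (qform A) x u = dqform x u.
Proof. by case: (derive_quadratic_along (qform A) x u _ _ (fun h => qformD h u x)). Qed.

End QuadraticForm.

Lemma quadratic_simple_root_01 (R : realType) (c L M : R) :
  0 < c -> c + L + M < 0 ->
  exists t, [/\ 0 <= t <= 1, c + t * L + t ^+ 2 * M = 0 & L + t * (M *+ 2) != 0].
Proof.
move=> c_gt0 c1_lt0.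
pose f t := c + t * L + t ^+ 2 * M.
have f_cont : continuous f.
  move=> t; apply: cvgD; first apply: cvgD; first exact: cvg_cst.
  - by apply: cvgM; [exact: cvg_id | exact: cvg_cst].
  - by apply: cvgM; [exact: exprn_continuous | exact: cvg_cst].
have [t t01 ft0] : exists2 t, t \in `[0, 1] & f t = 0.
  apply: IVT; [exact: ler01 | exact: continuous_subspaceT |].
  rewrite /f !(mul0r, mul1r, expr0n, expr1n, addr0) /=.
  by rewrite ge_min le_max (ltW c_gt0) (ltW c1_lt0) orbT.
move: t01; rewrite in_itv /= => t01.
exists t; split => //; rewrite mulr2n; apply/eqP => df0.
(* then f s = (s - t)^2 M for all s *)
have f0 : c = t ^+ 2 * M by move: ft0 df0; rewrite /f; nra.
have f1 : c + L + M = (1 - t) ^+ 2 * M by move: ft0 df0; rewrite /f; nra.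
have : c * (c + L + M) = (t * (1 - t) * M) ^+ 2 by rewrite {1}f0 f1; ring.
have := sqr_ge0 (t * (1 - t) * M); nra.
Qed.

Section PositiveOrthant.
Context {R : realType} {n : nat}.
Implicit Types (a b : 'rV[R]_n) (g : 'rV[R]_n -> R).

Lemma interior_orthant_approx g a :
  continuous g -> 0 < g a -> (forall i, 0 <= a 0 i) ->
  exists2 a' : 'rV[R]_n, (forall i, 0 < a' 0 i) & 0 < g a'.
Proof.
move=> g_cont ga_gt0 a_ge0.
pose one : 'rV[R]_n := const_mx 1.
have shift_cvg : (fun t : R => t *: one + a) @ 0 --> a.
  rewrite -[X in _ --> X]add0r -[X in X + a](scale0r one).
  by apply: cvgD; [apply: cvgZ; [exact: cvg_id | exact: cvg_cst] | exact: cvg_cst].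
have g_cvg : (fun t : R => g (t *: one + a)) @ 0^'+ --> g a.
  by apply: cvg_at_right_filter; exact: cvg_comp shift_cvg (g_cont a).
have [t [t_gt0 g_gt0]] : exists t : R, 0 < t /\ 0 < g (t *: one + a).
  apply: (@filter_ex _ 0^'+); near=> t; split.
  - by near: t; exact: nbhs_right_gt.
  - by near: t; exact: (cvgr_gt _ g_cvg _ ga_gt0).
exists (t *: one + a) => // i.
by rewrite !mxE mulr1; have := a_ge0 i; lra.
Unshelve. all: by end_near.
Qed.

Lemma orthant_segment_pos a b t :
  (forall i, 0 < a 0 i) -> (forall i, 0 < b 0 i) -> 0 <= t <= 1 ->
  forall i, 0 < (t *: (b - a) + a) 0 i.
Proof.
move=> a_gt0 b_gt0 /andP[t_ge0 t_le1] i; rewrite !mxE.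
have := a_gt0 i; have := b_gt0 i; nra.
Qed.

End PositiveOrthant.

Theorem lemma1 (R : realType) (n : nat) (A : 'M[R]_n) (a b : 'rV[R]_n) :
  (forall i, 0 <= a 0 i) -> (forall i, 0 <= b 0 i) ->
  0 < qform A a -> qform A b < 0 ->
  exists U : set 'rV[R]_n,
    [/\ open U,
        U `<=` [set x | forall i, 0 < x 0 i],
        (U `&` [set x | qform A x = 0]) !=set0 &
        smooth_hypersurface_of U (U `&` [set x | qform A x = 0])].
Proof.
move=> a_ge0 b_ge0 Qa_gt0 Qb_lt0.
have [a' a'_gt0 Qa'_gt0] := interior_orthant_approx _ _ (continuous_qform A) Qa_gt0 a_ge0.
have [b' b'_gt0 Qb'_lt0] : exists2 b' : 'rV_n, (forall i, 0 < b' 0 i) & qform A b' < 0.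
  have minusQ_cont : continuous (fun x => - qform A x).
    by move=> x; exact: continuousN (continuous_qform A x).
  have [|b' b'_gt0 Qb'_lt0] := interior_orthant_approx _ _ minusQ_cont _ b_ge0.
    by rewrite oppr_gt0.
  by exists b'; rewrite // -oppr_gt0.
pose v := b' - a'.
have [t [t01 Qt t_simple]] : exists t, [/\ 0 <= t <= 1,
    qform A a' + t * dqform A a' v + t ^+ 2 * qform A v = 0 &
    dqform A a' v + t * (qform A v *+ 2) != 0].
  apply: quadratic_simple_root_01 => //.
  by have := qformD A 1 v a'; rewrite scale1r subrK expr1n !mul1r => <-.
pose p := t *: v + a'.
pose S := [set x : 'rV_n | (forall i, 0 < x 0 i) /\ dqform A x v != 0].
have S_nbhs : nbhs p S.
  near=> x; split.
  - near: x; apply: filter_forall => i.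
    apply: (cvgr_gt _ (@coord_continuous _ 1 n 0 i p)).
    exact: orthant_segment_pos.
  - near: x; apply: (cvgr_neq0 _ (continuous_dqform A v p)).
    by rewrite /p dqformDl dqformxx.
exists S°; split.
- exact: open_interior.
- by move=> x /interior_subset [].
- by exists p; split; [exact: S_nbhs | rewrite /= /p qformD].
- apply: regular_zero_set_hypersurface.
  + exact: open_interior.
  + exact: at_most_quadratic_smooth (qform_at_most_quadratic A).
  + by move=> x /interior_subset [_ dx]; exists v; rewrite derive_qform.
Unshelve. all: by end_near.
Qed.
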